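(* Assume complete resource pooling. The normalizing constant $B$ of the stationary distributions of the detailed FCFS matching chains is given by $$B=\Big(\prod_{j=1}^J\beta_{s_j}\sum_{(S_1,\ldots,S_J)\in\mathcal{P}_J}\prod_{\ell=1}^{J-1}\big(\beta_{\{S_1,\ldots,S_\ell\}}-\alpha_{\mathcal{U}(\{S_1,\ldots,S_\ell\})}\big)^{-1}\Big)^{-1}=\Big(\prod_{i=1}^I\alpha_{c_i}\sum_{(C_1,\ldots,C_I)\in\mathcal{P}_I}\prod_{\ell=1}^{I-1}\big(\beta_{\mathcal{S}(\{C_1,\ldots,C_\ell\})}-\alpha_{\{C_1,\ldots,C_\ell\}}\big)^{-1}\Big)^{-1},$$ where $\mathcal{P}_J$ is the set of all orderings of $s_1,\ldots,s_J$ and $\mathcal{P}_I$ the set of all orderings of $c_1,\ldots,c_I$.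
   Context: Setting: finite type sets $\mathcal{C}=\{c_1,\ldots,c_I\}$, $\mathcal{S}=\{s_1,\ldots,s_J\}$, connected bipartite compatibility graph $G=(\mathcal{C},\mathcal{S},\mathcal{E})$, independent i.i.d. sequences $(c^m)_{m\in\mathbb{Z}}\sim\alpha$, $(s^n)_{n\in\mathbb{Z}}\sim\beta$, all probabilities positive. $\mathcal{S}(C)$ = server types compatible with some type in $C$; $\mathcal{C}(S)$ = customer types compatible with some type in $S$; $\mathcal{U}(S)=\mathcal{C}\setminus\mathcal{C}(\mathcal{S}\setminus S)$; $\alpha_C,\beta_S$ are sums of probabilities. Complete resource pooling: $\beta_S>\alpha_{\mathcal{U}(S)}$ for all nonempty proper $S\subsetneq\mathcal{S}$. Let $A$ be the a.s. unique (perfect) FCFS matching over $\mathbb{Z}$ (for each $(m,n)\in A$, every compatible $s^l$, $l<n$, is matched to some $c^k$, $k<m$, and every compatible $c^k$, $k<m$, to some $s^l$, $l<n$); set $\tilde{s}^m=s^n$ for $(m,n)\in A$. The server-by-server detailed chain $Z^s_N$: on the customer line position $m$ holds $\tilde{s}^m$ if $c^m$ is matched to a server of index $\le N$, else $c^m$; $Z^s_N$ is the word from the first position holding an unmatched customer to the last position holding an exchanged server (empty if the latter precedes the former). Its stationary distribution is $\pi_{Z^s}(\mathfrak{z})=B\prod_i\alpha_{c_i}^{\#c_i}\prod_j\beta_{s_j}^{\#s_j}$ ($\#$ counting types in $\mathfrak{z}$), and $B$ denotes this normalizing constant. *)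

From Stdlib Require Import Reals.
From mathcomp Require Import all_boot all_fingroup.
Set Implicit Arguments. Unset Strict Implicit. Unset Printing Implicit Defensive.

Local Open Scope R_scope.

(* Customer types c_1..c_I are 'I_I, server types s_1..s_J are 'I_J;
   the compatibility graph is  E : 'I_I -> 'I_J -> bool. *)

Definition vert (I J : nat) := ('I_I + 'I_J)%type.

Definition adj (I J : nat) (E : 'I_I -> 'I_J -> bool) : rel (vert I J) :=
  fun x y => match x, y with
             | inl i, inr j => E i j
             | inr j, inl i => E i j
             | _, _ => false
             end.

Definition connected_bip (I J : nat) (E : 'I_I -> 'I_J -> bool) : Prop :=
  forall x y : vert I J, connect (adj E) x y.

Definition Sof (I J : nat) (E : 'I_I -> 'I_J -> bool) (C : {set 'I_I}) : {set 'I_J} :=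
  [set j | [exists i in C, E i j]].
Definition Cof (I J : nat) (E : 'I_I -> 'I_J -> bool) (S : {set 'I_J}) : {set 'I_I} :=
  [set i | [exists j in S, E i j]].
Definition Uof (I J : nat) (E : 'I_I -> 'I_J -> bool) (S : {set 'I_J}) : {set 'I_I} :=
  ~: Cof E (~: S).

Definition msum (T : finType) (p : T -> R) (A : {set T}) : R :=
  \big[Rplus/0]_(x in A) p x.

Definition is_prob (T : finType) (p : T -> R) : Prop :=
  (forall x, 0 < p x) /\ \big[Rplus/0]_(x : T) p x = 1.

Definition CRP (I J : nat) (E : 'I_I -> 'I_J -> bool)
    (alpha : 'I_I -> R) (beta : 'I_J -> R) : Prop :=
  forall S : {set 'I_J}, S != set0 -> S != setT ->
    msum alpha (Uof E S) < msum beta S.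

(* States of the server-by-server detailed chain Z^s: words over C + S
   (customer letters = unmatched customers, server letters = exchanged
   servers), either empty, or starting with a customer letter, ending with
   a server letter, and such that no customer letter is compatible with
   any server letter occurring later in the word. *)
Definition is_cust (I J : nat) (x : vert I J) : bool :=
  if x is inl _ then true else false.
Definition is_serv (I J : nat) (x : vert I J) : bool :=
  if x is inr _ then true else false.

Fixpoint no_compat_later (I J : nat) (E : 'I_I -> 'I_J -> bool)
    (w : seq (vert I J)) : bool :=
  match w with
  | [::] => true
  | x :: w' =>
      (if x is inl i then
         all (fun y : vert I J => if y is inr j then ~~ E i j else true) w'
       else true)
      && no_compat_later E w'
  end.

Definition valid_state (I J : nat) (E : 'I_I -> 'I_J -> bool)
    (w : seq (vert I J)) : bool :=
  match w with
  | [::] => true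
  | x :: w' => [&& is_cust x, is_serv (last x w') & no_compat_later E w]
  end.

Definition letter_weight (I J : nat) (alpha : 'I_I -> R) (beta : 'I_J -> R)
    (x : vert I J) : R :=
  match x with inl i => alpha i | inr j => beta j end.

Definition word_weight (I J : nat) (alpha : 'I_I -> R) (beta : 'I_J -> R)
    (w : seq (vert I J)) : R :=
  \big[Rmult/1]_(x <- w) letter_weight alpha beta x.

(* total stationary weight of the states of length n; the normalizing
   constant B is the reciprocal of sum_n (states_weight n) *)
Definition states_weight (I J : nat) (E : 'I_I -> 'I_J -> bool)
    (alpha : 'I_I -> R) (beta : 'I_J -> R) (n : nat) : R :=
  \big[Rplus/0]_(w : n.-tuple (vert I J) | valid_state E w)
     word_weight alpha beta w.

Definition prefix_set (n : nat) (sigma : {perm 'I_n}) (l : nat) : {set 'I_n} :=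
  [set sigma k | k : 'I_n & (k <= l)%N].

Definition Binv_servers (I J : nat) (E : 'I_I -> 'I_J -> bool)
    (alpha : 'I_I -> R) (beta : 'I_J -> R) : R :=
  (\big[Rmult/1]_(j : 'I_J) beta j) *
  \big[Rplus/0]_(sigma : {perm 'I_J})
     \big[Rmult/1]_(l < J.-1)
        / (msum beta (prefix_set sigma l) - msum alpha (Uof E (prefix_set sigma l))).

Definition Binv_customers (I J : nat) (E : 'I_I -> 'I_J -> bool)
    (alpha : 'I_I -> R) (beta : 'I_J -> R) : R :=
  (\big[Rmult/1]_(i : 'I_I) alpha i) *
  \big[Rplus/0]_(sigma : {perm 'I_I})
     \big[Rmult/1]_(l < I.-1)
        / (msum beta (Sof E (prefix_set sigma l)) - msum alpha (prefix_set sigma l)).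

(* The reciprocal of B is the total weight sum_n states_weight n of the states.  A
   nonempty state is a customer c_i followed by a tail, and the weight of the tails of
   length n only depends on the set C of customer types read so far.  Reading one more
   letter gives the linear recursion
     x_(n+1) = (alpha_C + beta_(S \ S(C))) x_n + (tails of the sets C + {i}, i not in C),
   whose ratio is 1 - (beta_S(C) - alpha_C) < 1 by complete resource pooling.  Summing it
   by induction on the number of customer types outside C gives the total tail weight
     prod_(i not in C) alpha_i * omega(C) - 1,
   where omega(C) sums, over the orderings of the remaining customer types, the product
   of the inverse slacks (beta_S(C') - alpha_C')^-1 of C and of its successive
   extensions C'.  Taking C = {i} yields the customer formula.  The server formula is
   the customer formula for the transposed graph: reversing words and exchanging the
   roles of customers and servers preserves states and weights, and complementing
   prefixes turns beta_S - alpha_U(S) into alpha_C(S^c) - beta_(S^c). *)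

From Stdlib Require Import Reals Lra.
From Coquelicot Require Import Coquelicot.
From mathcomp Require Import all_boot all_fingroup zify Rstruct.
Set Implicit Arguments. Unset Strict Implicit. Unset Printing Implicit Defensive.
Local Open Scope R_scope.

Lemma is_series_0 : is_series (fun _ : nat => 0) 0.
Proof.
have := is_series_scal_l 0 _ _ (is_series_geom 0 ltac:(rewrite Rabs_R0; lra)).
by rewrite /scal /= /mult /= Rmult_0_l; apply: is_series_ext => n; rewrite Rmult_0_l.
Qed.

Lemma is_series_delta0 (c : R) : is_series (fun n => if n is 0%N then c else 0) c.
Proof.
apply: is_series_decr_1; rewrite /plus /opp /= Rplus_opp_r; exact: is_series_0.
Qed.

Lemma is_series_Rplus (a b : nat -> R) (la lb : R) :
  is_series a la -> is_series b lb -> is_series (fun n => a n + b n) (la + lb).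
Proof. exact: is_series_plus. Qed.

Lemma is_series_Rscal (c : R) (a : nat -> R) (l : R) :
  is_series a l -> is_series (fun n => c * a n) (c * l).
Proof. exact: is_series_scal_l. Qed.

Lemma is_series_big (T : Type) (r : seq T) (P : pred T) (F : T -> nat -> R) (L : T -> R) :
  (forall i, P i -> is_series (F i) (L i)) ->
  is_series (fun n => \big[Rplus/0]_(i <- r | P i) F i n) (\big[Rplus/0]_(i <- r | P i) L i).
Proof.
move=> FL; elim: r => [|x r IH].
  by rewrite big_nil; apply: is_series_ext is_series_0 => n; rewrite big_nil.
rewrite big_cons; case: ifP => Px; last by apply: is_series_ext IH => n; rewrite big_cons Px.
by apply: is_series_ext (is_series_Rplus (FL x Px) IH) => n; rewrite big_cons Px.
Qed.

(* x is the convolution of b with the geometric sequence of ratio rho. *)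
Lemma is_series_linear_rec (x b : nat -> R) (rho B : R) :
  0 <= rho < 1 -> (forall n, 0 <= b n) -> is_series b B ->
  x 0%N = 0 -> (forall n, x n.+1 = rho * x n + b n) ->
  is_series x (B / (1 - rho)).
Proof.
move=> rho01 b_ge0 bB x0 xS.
have x_conv n : x n.+1 = sum_f_R0 (fun k => b k * rho ^ (n - k)) n.
  elim: n => [|n IH]; first by rewrite xS x0 /=; ring.
  rewrite xS IH /= subnn Rmult_1_r scal_sum; congr (_ + _).
  apply: PartSum.sum_eq => k le_kn; rewrite subSn; last by apply/leP.
  by rewrite /=; ring.
have geom : is_series (pow rho) (/ (1 - rho)).
  by apply: is_series_geom; rewrite Rabs_pos_eq; lra.
have := is_series_mult_pos _ _ _ _ bB geom b_ge0 (fun n => pow_le rho n (proj1 rho01)).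
move/(is_series_ext _ (fun n => x n.+1)) => /(_ (fun n => esym (x_conv n))) xS_sum.
apply: is_series_decr_1; rewrite x0 /plus /opp /= Ropp_0 Rplus_0_r; exact: xS_sum.
Qed.

Lemma big_tuple_cons (R : Type) (idx : R) (op : Monoid.com_law idx) (T : finType) n
    (P : seq T -> bool) (F : seq T -> R) :
  \big[op/idx]_(w : n.+1.-tuple T | P w) F w =
  \big[op/idx]_(x : T) \big[op/idx]_(w : n.-tuple T | P (x :: w)) F (x :: w).
Proof.
rewrite pair_big_dep (reindex (fun p : T * n.-tuple T => [tuple of p.1 :: p.2])) /=.
  by apply: eq_bigl => -[x w].
exists (fun t : n.+1.-tuple T => (thead t, [tuple of behead t])) => [[x w] _|t _] /=.
  by congr (_, _); apply: val_inj.
by rewrite [RHS]tuple_eta.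
Qed.

Lemma big_tuple0 (R : Type) (idx : R) (op : Monoid.law idx) (T : finType)
    (P : pred (0.-tuple T)) (F : 0.-tuple T -> R) :
  \big[op/idx]_(w | P w) F w = if P [tuple] then F [tuple] else idx.
Proof. by rewrite big_mkcond (big_pred1 [tuple]) // => t; rewrite [t]tuple0; apply/esym/eqP. Qed.

Lemma big_perm_uniq_tuple (R : Type) (idx : R) (op : Monoid.com_law idx) n (G : seq 'I_n -> R) :
  \big[op/idx]_(s : {perm 'I_n}) G [seq s i | i <- enum 'I_n] =
  \big[op/idx]_(t : n.-tuple 'I_n | uniq t) G t.
Proof.
pose h (s : {perm 'I_n}) := [tuple s i | i < n].
have h_inj : injective h.
  move=> s1 s2 eq_h; apply/permP => i.
  by rewrite -(tnth_mktuple s1 i) -(tnth_mktuple s2 i) -/(h s1) -/(h s2) eq_h.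
rewrite (eq_bigl (mem (h @: setT))); last first.
  move=> t; rewrite /= -[RHS]/(t \in h @: setT); apply/idP/imsetP.
    move/tuple_uniqP => t_inj; exists (perm t_inj) => //.
    by apply: eq_from_tnth => i; rewrite tnth_mktuple permE.
  by case=> s _ ->; rewrite map_inj_uniq ?enum_uniq //; exact: perm_inj.
rewrite big_imset /=; last by move=> s1 s2 _ _; exact: h_inj.
by apply: eq_bigl => s; rewrite inE.
Qed.

Lemma setC_eq0 (T : finType) (A : {set T}) : (~: A == set0) = (A == setT).
Proof. by rewrite -setCT (inj_eq (@setC_inj _)). Qed.

Lemma setC_setU1 (T : finType) (i : T) (C : {set T}) : ~: (i |: C) = ~: C :\ i.
Proof. by rewrite setCU setIC -setDE. Qed.

Lemma card_setC_setU1 (T : finType) (i : T) (C : {set T}) :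
  i \notin C -> #|~: (i |: C)| = #|~: C|.-1.
Proof. by move=> Ci; rewrite setC_setU1 (cardsD1 i (~: C)) in_setC Ci. Qed.

Lemma prod_setC_setU1 (T : finType) (f : T -> R) (i : T) (C : {set T}) :
  i \notin C -> \big[Rmult/1]_(k in ~: C) f k = f i * \big[Rmult/1]_(k in ~: (i |: C)) f k.
Proof. by move=> Ci; rewrite setC_setU1 (big_setD1 i) // in_setC. Qed.

Lemma prod_setC1 (T : finType) (f : T -> R) (i : T) :
  \big[Rmult/1]_(k : T) f k = f i * \big[Rmult/1]_(k in ~: [set i]) f k.
Proof. by rewrite (bigD1 i) //=; congr (_ * _); apply: eq_bigl => k; rewrite !inE. Qed.

Lemma msum_ge0 (T : finType) (p : T -> R) (A : {set T}) :
  (forall x, 0 <= p x) -> 0 <= msum p A.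
Proof. by move=> p_ge0; rewrite /msum; elim/big_ind: _ => // [|x y]; lra. Qed.

Lemma msum_gt0 (T : finType) (p : T -> R) (A : {set T}) :
  (forall x, 0 < p x) -> A != set0 -> 0 < msum p A.
Proof.
move=> p_gt0 /set0Pn[x Ax]; rewrite /msum (big_setD1 x Ax) /=.
have : 0 <= \big[Rplus/0]_(i in A :\ x) p i.
  by elim/big_ind: _ => [|a b|i _]; [lra | lra | exact/Rlt_le].
by have := p_gt0 x; lra.
Qed.

Lemma msum_subset (T : finType) (p : T -> R) (A B : {set T}) :
  (forall x, 0 <= p x) -> A \subset B -> msum p A <= msum p B.
Proof.
move=> p_ge0 AB; rewrite /msum (big_setID (A := B) A) /= (setIidPr AB).
have : 0 <= \big[Rplus/0]_(i in B :\: A) p i.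
  by elim/big_ind: _ => [|a b|i _]; [lra | lra | exact: p_ge0].
lra.
Qed.

Lemma msumC (T : finType) (p : T -> R) (A : {set T}) :
  is_prob p -> msum p (~: A) = 1 - msum p A.
Proof.
case=> _ <-; rewrite /msum (bigID (mem A) predT) /=.
under [in LHS]eq_bigl do rewrite in_setC.
ring.
Qed.

Lemma msumT (T : finType) (p : T -> R) : is_prob p -> msum p setT = 1.
Proof. by move=> p_prob; rewrite -setC0 msumC // /msum big_set0; ring. Qed.

Lemma is_prob_card_gt0 n (p : 'I_n -> R) : is_prob p -> (0 < n)%N.
Proof.
case=> _ sum1; rewrite lt0n; apply/eqP => n0; move: sum1.
by rewrite big_pred0 => [|i]; [lra | case: i; rewrite n0].
Qed.

(** * Tails of states *)

Lemma mem_Sof_setU1 I J (E : 'I_I -> 'I_J -> bool) i C j :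
  (j \in Sof E (i |: C)) = E i j || (j \in Sof E C).
Proof.
rewrite !inE; apply/existsP/orP.
- case=> i'; rewrite !inE => /andP[/orP[/eqP-> | Ci'] Ei'j]; first by left.
  by right; apply/existsP; exists i'; rewrite Ci'.
- case=> [Eij | /existsP[i' /andP[Ci' Ei'j]]]; [exists i | exists i'];
    by rewrite !inE ?eqxx ?Ci' ?orbT.
Qed.

Lemma Sof0 I J (E : 'I_I -> 'I_J -> bool) : Sof E set0 = set0.
Proof. by apply/setP => j; rewrite !inE; apply/existsP => -[i]; rewrite inE. Qed.

Lemma word_weight_cons I J (alpha : 'I_I -> R) (beta : 'I_J -> R) x w :
  word_weight alpha beta (x :: w) = letter_weight alpha beta x * word_weight alpha beta w.
Proof. exact: big_cons. Qed.

Lemma word_weight_ge0 I J (alpha : 'I_I -> R) (beta : 'I_J -> R) w :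
  (forall i, 0 <= alpha i) -> (forall j, 0 <= beta j) -> 0 <= word_weight alpha beta w.
Proof.
move=> alpha_ge0 beta_ge0; rewrite /word_weight.
elim/big_ind: _ => [|x y|[i|j] _] //=; [lra | exact: Rmult_le_pos].
Qed.

Section Tails.

Variables (I J : nat) (E : 'I_I -> 'I_J -> bool) (alpha : 'I_I -> R) (beta : 'I_J -> R).

Definition ends_with_server (w : seq (vert I J)) :=
  if w is x :: w' then is_serv (last x w') else false.

Definition avoids_Sof (C : {set 'I_I}) (y : vert I J) :=
  if y is inr j then j \notin Sof E C else true.

(* w completes a state after any admissible prefix whose customer types form C. *)
Definition tail_state C (w : seq (vert I J)) :=
  [&& ends_with_server w, no_compat_later E w & all (avoids_Sof C) w].

Definition tail_weight C n :=
  \big[Rplus/0]_(w : n.-tuple (vert I J) | tail_state C w) word_weight alpha beta w.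

Lemma tail_state_cust C i w : tail_state C (inl i :: w) = tail_state (i |: C) w.
Proof.
rewrite /tail_state; have -> : ends_with_server (inl i :: w) = ends_with_server w by case: w.
have -> : all (avoids_Sof (i |: C)) w =
    all (fun y : vert I J => if y is inr j then ~~ E i j else true) w && all (avoids_Sof C) w.
  by rewrite -all_predI; apply: eq_all => -[i'|j] //=; rewrite mem_Sof_setU1 negb_or.
by rewrite /=; case: (all _ w); case: (no_compat_later E w); rewrite ?andbF.
Qed.

Lemma tail_state_serv C j w :
  tail_state C (inr j :: w) = (j \notin Sof E C) && (nilp w || tail_state C w).
Proof.
rewrite /tail_state /=; case: w => [|y w] /=; first by rewrite andbT.
by case: (j \in Sof E C); rewrite ?andbF //= andbT; case: (is_serv _); case: (_ && _).
Qed.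

Lemma tail_weight0 C : tail_weight C 0 = 0.
Proof. by rewrite /tail_weight big_tuple0. Qed.

Lemma tail_weight_ge0 C n :
  (forall i, 0 <= alpha i) -> (forall j, 0 <= beta j) -> 0 <= tail_weight C n.
Proof.
move=> alpha_ge0 beta_ge0; rewrite /tail_weight.
elim/big_ind: _ => [|x y|w _]; [lra | lra | exact: word_weight_ge0].
Qed.

Lemma tail_weight_setT n : (forall j, j \in Sof E setT) -> tail_weight setT n = 0.
Proof.
move=> Sof_full; rewrite /tail_weight big_pred0 // => w.
apply/negP => /and3P[]; case: (val w) => [|x s] // last_serv _ /allP avoid.
move: last_serv (avoid _ (mem_last x s)); rewrite /ends_with_server.
by case: (last x s) => //= j _; rewrite Sof_full.
Qed.

(* After a first customer of type i comes a tail of i |: C, which is a tail of C when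
   i \in C; after a first server outside S(C) comes a tail of C, or nothing. *)
Lemma tail_weightS C n :
  tail_weight C n.+1 =
  (msum alpha C + msum beta (~: Sof E C)) * tail_weight C n +
  (\big[Rplus/0]_(i in ~: C) (alpha i * tail_weight (i |: C) n) +
   if n is 0 then msum beta (~: Sof E C) else 0).
Proof.
have serv j : \big[Rplus/0]_(w : n.-tuple _ | tail_state C (inr j :: w))
                word_weight alpha beta (inr j :: w) =
              if j \in Sof E C then 0 else beta j * if n is 0 then 1 else tail_weight C n.
  under eq_bigl do rewrite tail_state_serv.
  case: (j \in Sof E C); first by rewrite big_pred0.
  case: n => [|m]; first by rewrite big_tuple0 /= word_weight_cons /word_weight big_nil.
  rewrite big_distrr; apply: eq_big => w; rewrite ?word_weight_cons //.
  by rewrite nilpE -size_eq0 size_tuple.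
have cust i : \big[Rplus/0]_(w : n.-tuple _ | tail_state C (inl i :: w))
                word_weight alpha beta (inl i :: w) = alpha i * tail_weight (i |: C) n.
  by rewrite big_distrr; apply: eq_big => w; rewrite ?tail_state_cust ?word_weight_cons.
rewrite {1}/tail_weight big_tuple_cons big_sumType (eq_bigr _ (fun i _ => cust i)).
rewrite (eq_bigr _ (fun j _ => serv j)) (bigID (mem C)) /=.
have -> : \big[Rplus/0]_(i | i \in C) (alpha i * tail_weight (i |: C) n) =
          msum alpha C * tail_weight C n.
  rewrite /msum big_distrl; apply: eq_bigr => i Ci.
  by congr (_ * tail_weight _ _); apply/setUidPr; rewrite sub1set.
have -> : \big[Rplus/0]_(i | i \notin C) (alpha i * tail_weight (i |: C) n) =
          \big[Rplus/0]_(i in ~: C) (alpha i * tail_weight (i |: C) n).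
  by apply: eq_bigl => i; rewrite inE.
have -> : \big[Rplus/0]_(j : 'I_J) (if j \in Sof E C then 0 else
                                     beta j * if n is 0 then 1 else tail_weight C n) =
          msum beta (~: Sof E C) * if n is 0 then 1 else tail_weight C n.
  rewrite /msum big_distrl [RHS]big_mkcond; apply: eq_bigr => j _.
  by rewrite in_setC; case: (j \in Sof E C); rewrite /= ?Rmult_0_l.
clear serv cust; case: n => [|m]; rewrite ?tail_weight0;
  set S := \big[Rplus/0]_(i in ~: C) _; ring.
Qed.

Lemma states_weight0 : states_weight E alpha beta 0 = 1.
Proof. by rewrite /states_weight big_tuple0 /word_weight big_nil. Qed.

Lemma valid_state_cust i w :
  valid_state E (inl i :: w) = tail_state [set i] w.
Proof.
have avoid0 : all (avoids_Sof set0) w by apply/allP => -[i'|j] _ //=; rewrite Sof0 inE.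
by rewrite -[[set i]]setU0 -tail_state_cust /tail_state /= avoid0 andbT.
Qed.

Lemma states_weightS n :
  states_weight E alpha beta n.+1 =
  \big[Rplus/0]_(i : 'I_I) (alpha i * tail_weight [set i] n).
Proof.
rewrite /states_weight big_tuple_cons big_sumType.
rewrite [X in _ + X = _]big1 ?Rplus_0_r => [|j _]; last exact: big_pred0.
apply: eq_bigr => i _; rewrite big_distrr; apply: eq_big => w.
  by rewrite valid_state_cust.
by rewrite word_weight_cons.
Qed.

End Tails.

(** * Orderings *)

Lemma prefix_set_take n (s : {perm 'I_n}) l :
  prefix_set s l = [set:: take l.+1 [seq s i | i <- enum 'I_n]].
Proof.
apply/setP => y; rewrite inE -map_take; apply/imsetP/mapP.
  case=> k; rewrite inE => le_kl ->; exists k => //.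
  by rewrite in_take ?mem_enum // index_enum_ord ltnS.
case=> k; rewrite in_take ?mem_enum // index_enum_ord ltnS => le_kl ->.
by exists k; rewrite ?inE.
Qed.

Section Orderings.

Variables (I J : nat) (E : 'I_I -> 'I_J -> bool) (alpha : 'I_I -> R) (beta : 'I_J -> R).

Definition slack (C : {set 'I_I}) := msum beta (Sof E C) - msum alpha C.

Fixpoint order_weight (m : nat) (C : {set 'I_I}) : R :=
  if m is m'.+1 then / slack C * \big[Rplus/0]_(i in ~: C) order_weight m' (i |: C) else 1.

Lemma order_weightS m C :
  order_weight m.+1 C = / slack C * \big[Rplus/0]_(i in ~: C) order_weight m (i |: C).
Proof. by []. Qed.

Definition chain_weight (C : {set 'I_I}) (t : seq 'I_I) :=
  \big[Rmult/1]_(l < size t) / slack (C :|: [set:: take l t]).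

Lemma order_weight_tuple m C :
  #|~: C| = m ->
  order_weight m C =
  \big[Rplus/0]_(t : m.-tuple 'I_I | uniq t && all (mem (~: C)) t) chain_weight C t.
Proof.
elim: m C => [|m IH] C cardC; first by rewrite big_tuple0 /chain_weight big_ord0.
rewrite order_weightS (@big_tuple_cons _ _ _ _ _ (fun t => uniq t && all (mem (~: C)) t)).
rewrite big_distrr [LHS]big_mkcond /=; apply: eq_bigr => x _.
rewrite in_setC; case: (boolP (x \in C)) => Cx /=.
  by rewrite big_pred0 // => t; rewrite /= andbF.
rewrite IH; last by rewrite card_setC_setU1 // cardC.
rewrite big_distrr; apply: eq_big => [t|t _].
  have -> : all (mem (~: (x |: C))) t = (x \notin t) && all (mem (~: C)) t.
    rewrite -has_pred1 -all_predC -all_predI; apply: eq_all => y /=.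
    by rewrite !inE negb_or eq_sym.
  by case: (uniq t); case: (x \in t); case: (all _ t).
rewrite /chain_weight big_ord_recl /= set_nil setU0; congr (_ * _); apply: eq_bigr => l _.
by rewrite /= set_cons setUA [C :|: [set x]]setUC.
Qed.

End Orderings.

Lemma Binv_customersE I J (E : 'I_I -> 'I_J -> bool) alpha beta : (0 < I)%N ->
  Binv_customers E alpha beta =
  \big[Rmult/1]_(i : 'I_I) alpha i *
  \big[Rplus/0]_(i : 'I_I) order_weight E alpha beta I.-1 [set i].
Proof.
case: I E alpha beta => [//|n] E alpha beta _; rewrite /Binv_customers; congr (_ * _).
under eq_bigr do under eq_bigr do rewrite prefix_set_take.
pose G u := \big[Rmult/1]_(l < n)
  / (msum beta (Sof E [set:: take l.+1 u]) - msum alpha [set:: take l.+1 u]).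
rewrite (big_perm_uniq_tuple _ G) (@big_tuple_cons _ _ _ _ _ uniq G); apply: eq_bigr => x _.
rewrite order_weight_tuple; last by rewrite cardsC1 card_ord.
apply: eq_big => [t|t _].
  rewrite /= andbC; congr (_ && _).
  by rewrite -has_pred1 -all_predC; apply: eq_all => y /=; rewrite !inE eq_sym.
rewrite /chain_weight size_tuple; apply: eq_bigr => l _.
by rewrite /= set_cons.
Qed.

Section Series.

Variables (I J : nat) (E : 'I_I -> 'I_J -> bool) (alpha : 'I_I -> R) (beta : 'I_J -> R).
Hypotheses (alpha_prob : is_prob alpha) (beta_prob : is_prob beta).

Definition tail_mass (C : {set 'I_I}) :=
  \big[Rmult/1]_(i in ~: C) alpha i * order_weight E alpha beta #|~: C| C - 1.

Lemma tail_mass_setT : tail_mass setT = 0.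
Proof. by rewrite /tail_mass setCT big_set0 cards0 /=; ring. Qed.

Lemma tail_massE C : C != setT -> 0 < slack E alpha beta C ->
  tail_mass C =
  (\big[Rplus/0]_(i in ~: C) (alpha i * tail_mass (i |: C)) + msum beta (~: Sof E C)) /
  slack E alpha beta C.
Proof.
move=> CT slack_gt0.
have : (0 < #|~: C|)%N.
  by rewrite card_gt0 setC_eq0.
case cardC: #|~: C| => [//|m] _.
set P := \big[Rmult/1]_(i in ~: C) alpha i.
have sumV : \big[Rplus/0]_(i in ~: C) (alpha i * tail_mass (i |: C)) + msum alpha (~: C) =
            P * \big[Rplus/0]_(i in ~: C) order_weight E alpha beta m (i |: C).
  rewrite /msum -big_split big_distrr; apply: eq_bigr => i Ci /=.
  have Ci' : i \notin C by rewrite -in_setC.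
  rewrite /tail_mass card_setC_setU1 // cardC succnK /P [in RHS](prod_setC_setU1 _ Ci'); ring.
have : msum alpha (~: C) = 1 - msum alpha C by exact: msumC.
have : msum beta (~: Sof E C) = 1 - msum beta (Sof E C) by exact: msumC.
rewrite {1}/tail_mass cardC order_weightS -/P; move: sumV.
set S := \big[Rplus/0]_(i in ~: C) order_weight _ _ _ _ _.
set X := \big[Rplus/0]_(i in ~: C) (alpha i * _) => sumV bS aC.
have -> : X = P * S - (1 - msum alpha C) by rewrite -aC -sumV; ring.
by rewrite bS /slack in slack_gt0 *; field; lra.
Qed.

Hypothesis Sof_full : forall j, j \in Sof E setT.
Hypothesis slack_gt0 : forall C, C != set0 -> C != setT -> 0 < slack E alpha beta C.

Lemma is_series_tail_weight C : C != set0 -> is_series (tail_weight E alpha beta C) (tail_mass C).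
Proof.
have alpha_ge0 i : 0 <= alpha i by apply: Rlt_le; case: alpha_prob.
have beta_ge0 j : 0 <= beta j by apply: Rlt_le; case: beta_prob.
move cardC: #|~: C| => m; elim: m C cardC => [|m IH] C cardC C0.
  have /eqP -> : C == setT by rewrite -setC_eq0 -cards_eq0 cardC.
  by rewrite tail_mass_setT; apply: is_series_ext is_series_0 => n; rewrite tail_weight_setT.
have CT : C != setT by apply: contra_eq_neq cardC => ->; rewrite setCT cards0.
rewrite (tail_massE CT (slack_gt0 C0 CT)).
have -> : slack E alpha beta C = 1 - (msum alpha C + msum beta (~: Sof E C)).
  by rewrite /slack msumC //; ring.
apply: is_series_linear_rec (tail_weight0 _ _ _ _) (tail_weightS _ _ _ _).
- have : 0 <= msum alpha C by exact: msum_ge0.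
  have : 0 <= msum beta (~: Sof E C) by exact: msum_ge0.
  have : msum beta (~: Sof E C) = 1 - msum beta (Sof E C) by exact: msumC.
  have := slack_gt0 C0 CT; rewrite /slack; lra.
- move=> n; apply: Rplus_le_le_0_compat; last by case: n => [|n]; [exact: msum_ge0 | lra].
  elim/big_ind: _ => [|x y|i _]; [lra | lra | exact/Rmult_le_pos/tail_weight_ge0].
apply: is_series_Rplus; last exact: is_series_delta0.
apply: is_series_big => i Ci; apply/is_series_Rscal/IH.
  by rewrite card_setC_setU1 -?in_setC // cardC.
by apply/set0Pn; exists i; rewrite setU11.
Qed.

Lemma is_series_states_weight :
  is_series (states_weight E alpha beta) (Binv_customers E alpha beta).
Proof.
have I_gt0 := is_prob_card_gt0 alpha_prob.
apply: is_series_decr_1; rewrite states_weight0.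
apply: (is_series_ext _ _ _ (fun n => esym (states_weightS E alpha beta n))).
suff -> : plus (Binv_customers E alpha beta) (opp 1) =
          \big[Rplus/0]_(i : 'I_I) (alpha i * tail_mass [set i]).
  apply: is_series_big => i _; apply/is_series_Rscal/is_series_tail_weight.
  by apply/set0Pn; exists i; exact: set11.
set P := \big[Rmult/1]_(i : 'I_I) alpha i.
have mass i : alpha i * tail_mass [set i] + alpha i = P * order_weight E alpha beta I.-1 [set i].
  rewrite /tail_mass cardsC1 card_ord /P (prod_setC1 _ i).
  by set Q := \big[Rmult/1]_(k in ~: [set i]) alpha k; ring.
have sum1 : \big[Rplus/0]_(i : 'I_I) alpha i = 1 by case: alpha_prob.
rewrite /plus /opp /= Binv_customersE // -/P big_distrr.
by rewrite (eq_bigr _ (fun i _ => esym (mass i))) big_split /= sum1; ring.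
Qed.

End Series.

(** * Mirror symmetry *)

Definition flip_letter (A B : Type) (x : A + B) : B + A :=
  match x with inl a => inr a | inr b => inl b end.

Lemma flip_letterK (A B : Type) : cancel (@flip_letter A B) (@flip_letter B A).
Proof. by case. Qed.

Definition mirror I J (w : seq (vert I J)) : seq (vert J I) := rev (map (@flip_letter _ _) w).

Lemma mirrorK I J : cancel (@mirror I J) (@mirror J I).
Proof. by move=> w; rewrite /mirror map_rev revK -map_comp (eq_map (@flip_letterK _ _)) map_id. Qed.

Lemma no_compat_later_rcons I J (E : 'I_I -> 'I_J -> bool) (s : seq (vert I J)) y :
  no_compat_later E (rcons s y) =
  no_compat_later E s &&
  (if y is inr j then all (fun z : vert I J => if z is inl i then ~~ E i j else true) s
   else true).
Proof.
elim: s => [|x s IH] /=; first by case: y.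
rewrite {}IH; case: x => [i|j] //=; rewrite all_rcons.
case: y => [i'|j] /=; first by rewrite !andbT.
by case: (E i j); case: (all _ s); case: (no_compat_later E s); case: (all _ s).
Qed.

Section Mirror.

Variables (I J : nat) (E : 'I_I -> 'I_J -> bool).

Lemma no_compat_later_mirror (w : seq (vert I J)) :
  no_compat_later (fun j i => E i j) (mirror w) = no_compat_later E w.
Proof.
elim: w => [|x w IH] //; rewrite /mirror /= rev_cons no_compat_later_rcons -/(mirror w) IH.
case: x => [i|j] /=; last by rewrite andbT.
by rewrite andbC all_rev all_map; congr (_ && _); apply: eq_all => -[].
Qed.

Lemma valid_state_mirror (w : seq (vert I J)) :
  valid_state (fun j i => E i j) (mirror w) = valid_state E w.
Proof.
case: w => [|x w] //; case/lastP: w => [|w y]; first by case: x.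
rewrite /valid_state -[no_compat_later E _]no_compat_later_mirror.
have -> : mirror (x :: rcons w y) = flip_letter y :: rcons (mirror w) (flip_letter x).
  by rewrite /mirror map_cons map_rcons rev_cons rev_rcons rcons_cons.
by rewrite /= !last_rcons; case: x; case: y.
Qed.

Lemma word_weight_mirror (alpha : 'I_I -> R) (beta : 'I_J -> R) (w : seq (vert I J)) :
  word_weight beta alpha (mirror w) = word_weight alpha beta w.
Proof. by rewrite /word_weight big_rev big_map; apply: eq_bigr => -[]. Qed.

Lemma states_weight_mirror alpha beta n :
  states_weight E alpha beta n = states_weight (fun j i => E i j) beta alpha n.
Proof.
pose h (w : n.-tuple (vert I J)) : n.-tuple (vert J I) := [tuple of mirror w].
pose h' (w : n.-tuple (vert J I)) : n.-tuple (vert I J) := [tuple of mirror w].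
rewrite /states_weight (reindex h) /=; last first.
  by exists h' => w _; apply: val_inj; rewrite /= mirrorK.
by apply: eq_big => w; rewrite ?valid_state_mirror ?word_weight_mirror.
Qed.

End Mirror.

Lemma mem_prefix_set n (s : {perm 'I_n}) l y : (y \in prefix_set s l) = ((s^-1)%g y <= l)%N.
Proof.
apply/imsetP/idP => [[k]|le_yl]; first by rewrite inE => le_kl ->; rewrite permK.
by exists ((s^-1)%g y); rewrite ?inE ?permKV.
Qed.

Lemma setC_prefix_set n (s : {perm 'I_n}) (l : 'I_n.-1) :
  ~: prefix_set s l = prefix_set (perm (@rev_ord_inj n) * s)%g (rev_ord l).
Proof.
apply/setP => y; rewrite in_setC !mem_prefix_set invMg permM.
have -> : (perm (@rev_ord_inj n))^-1%g (s^-1%g y) = rev_ord (s^-1%g y).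
  by apply: (@perm_inj _ (perm (@rev_ord_inj n))); rewrite permKV permE rev_ordK.
move: (s^-1%g y) => k; have := ltn_ord k; have := ltn_ord l; rewrite /= => lt_l lt_k.
by apply/negP/idP; lia.
Qed.

Lemma Sof_transpose I J (E : 'I_I -> 'I_J -> bool) (S : {set 'I_J}) :
  Sof (fun j i => E i j) S = Cof E S.
Proof. by []. Qed.

Lemma Binv_servers_mirror I J (E : 'I_I -> 'I_J -> bool) alpha beta :
  is_prob alpha -> is_prob beta ->
  Binv_servers E alpha beta = Binv_customers (fun j i => E i j) beta alpha.
Proof.
move=> alpha_prob beta_prob; rewrite /Binv_servers /Binv_customers; congr (_ * _).
rewrite [RHS](reindex_inj (mulgI (perm (@rev_ord_inj J)))); apply: eq_bigr => s _.
rewrite [RHS](reindex_inj rev_ord_inj); apply: eq_bigr => l _.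
rewrite -setC_prefix_set Sof_transpose /Uof (msumC _ alpha_prob) (msumC _ beta_prob).
by congr (/ _); ring.
Qed.

(** * Complete resource pooling *)

Lemma connected_Sof_setT I J (E : 'I_I -> 'I_J -> bool) :
  connected_bip E -> (0 < I)%N -> forall j, j \in Sof E setT.
Proof.
move=> conn I_gt0 j; case/connectP: (conn (inr j) (inl (Ordinal I_gt0))) => -[|[i|//] p] //=.
by case/andP => Eij _ _; rewrite inE; apply/existsP; exists i; rewrite inE.
Qed.

Lemma connected_Cof_setT I J (E : 'I_I -> 'I_J -> bool) :
  connected_bip E -> (0 < J)%N -> forall i, i \in Cof E setT.
Proof.
move=> conn J_gt0 i; case/connectP: (conn (inl i) (inr (Ordinal J_gt0))) => -[|[//|j] p] //=.
by case/andP => Eij _ _; rewrite inE; apply/existsP; exists j; rewrite inE.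
Qed.

Lemma slack_customers_gt0 I J (E : 'I_I -> 'I_J -> bool) alpha beta :
  is_prob alpha -> is_prob beta -> connected_bip E -> CRP E alpha beta ->
  forall C, C != set0 -> C != setT -> 0 < slack E alpha beta C.
Proof.
move=> alpha_prob beta_prob conn crp C C0 CT; rewrite /slack.
have [SCT|SCT] := eqVneq (Sof E C) setT.
  have : 0 < msum alpha (~: C) by apply: msum_gt0; [case: alpha_prob | rewrite setC_eq0].
  have : msum alpha (~: C) = 1 - msum alpha C by exact: msumC.
  by rewrite SCT msumT //; lra.
have SC0 : Sof E C != set0.
  case/set0Pn: C0 => i Ci.
  have := connected_Cof_setT conn (is_prob_card_gt0 beta_prob) i.
  rewrite inE => /existsP[j /andP[_ Eij]].
  by apply/set0Pn; exists j; rewrite inE; apply/existsP; exists i; rewrite Ci.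
have : msum alpha C <= msum alpha (Uof E (Sof E C)).
  apply: msum_subset => [i|]; first by apply: Rlt_le; case: alpha_prob.
  apply/subsetP => i Ci; rewrite !inE; apply/existsP => -[j /andP[]].
  by rewrite !inE => /negP SCj Eij; apply: SCj; apply/existsP; exists i; rewrite Ci.
by have := crp _ SC0 SCT; lra.
Qed.

Lemma slack_servers_gt0 I J (E : 'I_I -> 'I_J -> bool) alpha beta :
  is_prob alpha -> is_prob beta -> CRP E alpha beta ->
  forall S, S != set0 -> S != setT -> 0 < slack (fun j i => E i j) beta alpha S.
Proof.
move=> alpha_prob beta_prob crp S S0 ST.
have := crp (~: S); rewrite setC_eq0 ST -setC0 (inj_eq (@setC_inj _)) S0 => /(_ isT isT).
by rewrite /Uof setCK !msumC // /slack Sof_transpose; lra.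
Qed.

Theorem theorem5p3 (I J : nat) (E : 'I_I -> 'I_J -> bool)
  (alpha : 'I_I -> R) (beta : 'I_J -> R) :
  is_prob alpha -> is_prob beta -> connected_bip E ->
  CRP E alpha beta ->
  infinite_sum (states_weight E alpha beta) (Binv_servers E alpha beta) /\
  infinite_sum (states_weight E alpha beta) (Binv_customers E alpha beta).
Proof.
move=> alpha_prob beta_prob conn crp.
have I_gt0 := is_prob_card_gt0 alpha_prob; have J_gt0 := is_prob_card_gt0 beta_prob.
split; apply/is_series_Reals.
  rewrite Binv_servers_mirror //.
  apply: (is_series_ext _ _ _ (fun n => esym (states_weight_mirror E alpha beta n))).
  apply: is_series_states_weight => //; first exact: connected_Cof_setT.
  exact: slack_servers_gt0.
apply: is_series_states_weight => //; first exact: connected_Sof_setT.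
exact: slack_customers_gt0.
Qed.
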